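(* Let $n\ge4$, let $(e_i)_{i=0}^n$ be the standard unit vector basis of the Euclidean space $\ell_2^{n+1}$, let $M=\sqrt{(2/\ln 2)\,n\log_2 n}$, and let $$A=\Bigl\{M\sum_{i=1}^n t_ie_i+E_{n-1}(t_1,\dots,t_n)\,e_0:\ (t_1,\dots,t_n)\in\Delta_{n-1}\Bigr\}.$$ Then $A$ is approximately convex, $$\mathcal{H}(A,\operatorname{Co}(A))=\log_2 n,\qquad\text{and}\qquad\operatorname{diam}(A)\le\frac{2}{\sqrt{\ln 2}}\sqrt{n\log_2 n}+\log_2 n .$$
   Context: $\Delta_{n-1}=\{(t_1,\dots,t_n): t_i\ge0,\sum_i t_i=1\}$, and $E_{n-1}(t_1,\dots,t_n)=\sum_{i=1}^n t_i\log_2(1/t_i)$ with $0\log_2(1/0)=0$. A set $A$ is approximately convex if $d(tx+(1-t)y,A)\le1$ for all $x,y\in A$, $t\in[0,1]$, where $d(x,A)=\inf_{a\in A}\|x-a\|$. $\mathcal{H}$ is the Hausdorff distance, $\operatorname{Co}$ the convex hull, $\operatorname{diam}(A)=\sup\{\|x-y\|:x,y\in A\}$. *)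

(* R : realType. Points of l_2^{n+1} are functions 'I_n.+1 -> R,
   index 0 being the e_0 coordinate. *)
From mathcomp Require Import all_boot all_order all_algebra.
From mathcomp Require Import all_classical all_reals.
From mathcomp Require Import exp.
Set Implicit Arguments. Unset Strict Implicit. Unset Printing Implicit Defensive.
Import Order.TTheory GRing.Theory Num.Theory.
Local Open Scope ring_scope.
Local Open Scope classical_set_scope.

Section Defs.
Variable R : realType.

Definition log2 (x : R) : R := ln x / ln 2.

Definition ent_term (x : R) : R := if x == 0 then 0 else x * log2 (x^-1).

Definition entropy n (t : 'I_n -> R) : R := \sum_(i < n) ent_term (t i).

Definition simplex n : set ('I_n -> R) :=
  [set t | (forall i, 0 <= t i) /\ \sum_(i < n) t i = 1].

Definition edist k (x y : 'I_k -> R) : R := Num.sqrt (\sum_(i < k) (x i - y i) ^+ 2).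

Definition dist_set k (x : 'I_k -> R) (A : set ('I_k -> R)) : R :=
  inf [set edist x a | a in A].

Definition approx_convex k (A : set ('I_k -> R)) : Prop :=
  forall x y, A x -> A y -> forall t : R, 0 <= t <= 1 ->
    dist_set (fun i => t * x i + (1 - t) * y i) A <= 1.

Definition conv_hull k (A : set ('I_k -> R)) : set ('I_k -> R) :=
  [set x | exists (m : nat) (w : 'I_m -> R) (p : 'I_m -> 'I_k -> R),
     (forall j, 0 <= w j) /\ \sum_(j < m) w j = 1 /\ (forall j, A (p j)) /\
     x = (fun i => \sum_(j < m) w j * p j i)].

Definition hausdorff k (A B : set ('I_k -> R)) : R :=
  Order.max (sup [set dist_set a B | a in A]) (sup [set dist_set b A | b in B]).

Definition diam k (A : set ('I_k -> R)) : R :=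
  sup [set d | exists x y, A x /\ A y /\ d = edist x y].

Definition Mconst (n : nat) : R := Num.sqrt ((2 / ln 2) * n%:R * log2 n%:R).

Definition embed n (t : 'I_n -> R) : 'I_n.+1 -> R :=
  fun i => match unlift ord0 i with
           | Some j => Mconst n * t j
           | None => entropy t
           end.

Definition setA (n : nat) : set ('I_n.+1 -> R) := [set @embed n t | t in @simplex n].

End Defs.
Arguments setA R n : clear implicits.

From mathcomp Require Import all_boot all_order all_algebra.
From mathcomp Require Import all_classical all_reals.
From mathcomp Require Import exp.
From mathcomp Require Import ring lra.
Set Implicit Arguments. Unset Strict Implicit. Unset Printing Implicit Defensive.
Import Order.TTheory GRing.Theory Num.Theory.
Local Open Scope ring_scope.
Local Open Scope classical_set_scope.

(* A is the graph of the concave function E over the simplex scaled by M.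
   A convex combination of two points of A lies on the vertical line through
   a point of A, below it by at most the binary entropy of the weights, which
   is at most 1.  Every point of Co(A) lies on such a line at a height in
   [0, log2 n], hence within log2 n of A since 0 <= E <= log2 n.  Conversely
   the barycenter of the vertices lies at height 0 above the uniform
   distribution, where E = log2 n; moving horizontally by d costs M^2 |d|^2,
   which by ln n - E(t) ln 2 <= n |t - u|^2 (a consequence of ln x <= x - 1)
   and the choice of M dominates the loss of entropy.  The diameter bound
   splits into the horizontal part M sqrt 2 and the vertical part log2 n. *)

Section NegXlnX.
Variable R : realType.
Implicit Types a b c x l m : R.

Definition negxlnx x : R := - (x * ln x).

Lemma ln_le_subr1 x : 0 < x -> ln x <= x - 1.
Proof.
move=> x0; have := @le_ln1Dx R (x - 1).
have -> : 1 + (x - 1) = x by ring.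
by apply; lra.
Qed.

Lemma gibbs_le a c : 0 <= a -> 0 <= c -> (0 < a -> 0 < c) ->
  a - c <= a * ln a - a * ln c.
Proof.
move=> a0 c0 ac; have [->|an0] := eqVneq a 0; first by rewrite !mul0r subrr; lra.
have ap : 0 < a by rewrite lt_def an0 a0.
have cp := ac ap.
have h := @ln_le_subr1 (c / a) (divr_gt0 cp ap).
rewrite lnM ?posrE ?invr_gt0 // lnV ?posrE // in h.
have : a * (ln c - ln a) <= a * (c / a - 1) by rewrite ler_pM2l.
have -> : a * (c / a - 1) = c - a by field; rewrite gt_eqF.
lra.
Qed.

Lemma ln2_gt0 : 0 < ln (2 : R).
Proof. by apply: ln_gt0; lra. Qed.

Lemma negxlnx0 : negxlnx 0 = 0.
Proof. by rewrite /negxlnx mul0r oppr0. Qed.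

Lemma negxlnx_ge0 x : 0 <= x <= 1 -> 0 <= negxlnx x.
Proof.
case/andP=> x0 x1; rewrite /negxlnx oppr_ge0.
have [->|xn0] := eqVneq x 0; first by rewrite mul0r.
by rewrite mulr_ge0_le0 // ln_le0.
Qed.

Lemma negxlnx_concave l m a b : 0 <= l -> 0 <= m -> l + m = 1 -> 0 <= a -> 0 <= b ->
  l * negxlnx a + m * negxlnx b <= negxlnx (l * a + m * b).
Proof.
move=> l0 m0 lm a0 b0.
have [l_eq0|ln0] := eqVneq l 0.
  have -> : m = 1 by lra.
  by rewrite l_eq0 !mul0r !mul1r !add0r.
have [m_eq0|mn0] := eqVneq m 0.
  have -> : l = 1 by lra.
  by rewrite m_eq0 !mul0r !mul1r !addr0.
have lp : 0 < l by rewrite lt_def ln0 l0.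
have mp : 0 < m by rewrite lt_def mn0 m0.
set c := l * a + m * b.
have c0 : 0 <= c by rewrite addr_ge0 // mulr_ge0.
have ha := @gibbs_le a c a0 c0 (fun ap => ltr_wpDr (mulr_ge0 m0 b0) (mulr_gt0 lp ap)).
have hb := @gibbs_le b c b0 c0 (fun bp => ltr_wpDl (mulr_ge0 l0 a0) (mulr_gt0 mp bp)).
(* the weighted sum of the [a - c], [b - c] vanishes, so Gibbs' inequality at [c] concludes *)
have mean : l * (a - c) + m * (b - c) = 0.
  rewrite /c; have -> : m = 1 - l by lra.
  ring.
have := lerD (ler_wpM2l l0 ha) (ler_wpM2l m0 hb); rewrite mean => h.
have -> : negxlnx c = - (l * (a * ln c) + m * (b * ln c)) by rewrite /negxlnx /c; ring.
move: h; rewrite /negxlnx !mulrBr; lra.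
Qed.

Lemma negxlnxD_le x y : 0 <= x -> 0 <= y -> negxlnx (x + y) <= negxlnx x + negxlnx y.
Proof.
move=> x0 y0; rewrite /negxlnx mulrDl opprD lerD //.
  have [->|xn0] := eqVneq x 0; first by rewrite !mul0r.
  have xp : 0 < x by rewrite lt_def xn0 x0.
  by rewrite lerN2 ler_pM2l // ler_ln ?posrE ?lerDl //; exact: ltr_wpDr.
have [->|yn0] := eqVneq y 0; first by rewrite !mul0r.
have yp : 0 < y by rewrite lt_def yn0 y0.
by rewrite lerN2 ler_pM2l // ler_ln ?posrE ?lerDr //; exact: ltr_wpDl.
Qed.

Lemma negxlnxM l a : 0 <= l -> 0 <= a ->
  negxlnx (l * a) = l * negxlnx a + a * negxlnx l.
Proof.
move=> l0 a0.
have [->|ln0] := eqVneq l 0; first by rewrite !(mul0r, mulr0, negxlnx0, addr0).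
have [->|an0] := eqVneq a 0; first by rewrite !(mul0r, mulr0, negxlnx0, addr0).
have lp : 0 < l by rewrite lt_def ln0 l0.
have ap : 0 < a by rewrite lt_def an0 a0.
by rewrite /negxlnx lnM ?posrE //; ring.
Qed.

Lemma negxlnx_binary_le l m : 0 <= l -> 0 <= m -> l + m = 1 ->
  negxlnx l + negxlnx m <= ln 2.
Proof.
move=> l0 m0 lm.
have h0 : 0 < 2^-1 :> R by rewrite invr_gt0; lra.
have hl := @gibbs_le l 2^-1 l0 (ltW h0) (fun _ => h0).
have hm := @gibbs_le m 2^-1 m0 (ltW h0) (fun _ => h0).
have e2 : ln (2^-1 : R) = - ln 2 by rewrite lnV // posrE; lra.
rewrite e2 !mulrN opprK in hl hm.
have e3 : l * ln 2 + m * ln 2 = ln 2 by rewrite -mulrDl lm mul1r.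
move: hl hm e3; rewrite /negxlnx; lra.
Qed.

End NegXlnX.

Lemma sqr_le_sqrD_gap (R : realDomainType) (x e g : R) :
  0 <= x -> 0 <= e -> 0 <= g -> x - e <= g -> x ^+ 2 <= e ^+ 2 + 2 * x * g.
Proof.
move=> x0 e0 g0 xeg; have [gx|xg] := lerP g x; last by nra.
have : x - g <= e by lra.
have : 0 <= x - g by lra.
nra.
Qed.

Lemma sqrt_sqrD_le (R : rcfType) (a b : R) :
  0 <= a -> 0 <= b -> Num.sqrt (a ^+ 2 + b ^+ 2) <= a + b.
Proof.
move=> a0 b0; rewrite -(ger0_norm (addr_ge0 a0 b0)) -sqrtr_sqr ler_sqrt ?sqr_ge0 //; nra.
Qed.

Section Entropy.
Variables (R : realType) (n : nat).
Implicit Types (s t : 'I_n -> R) (l : R).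

Lemma ent_termE x : 0 <= x -> ent_term x = negxlnx x / ln 2 :> R.
Proof.
move=> x0; rewrite /ent_term /negxlnx /log2; case: eqP => [->|/eqP xn0].
  by rewrite mul0r oppr0 mul0r.
have xp : 0 < x by rewrite lt_def xn0 x0.
by rewrite lnV ?posrE // mulrA mulrN mulNr.
Qed.

Lemma simplex_gt0 t : simplex t -> (0 < n)%N.
Proof. by case: n t => [t [_]|//]; rewrite big_ord0 => /eqP; rewrite eq_sym oner_eq0. Qed.

Lemma simplex_le1 t i : simplex t -> t i <= 1.
Proof. by case=> t0 <-; rewrite (bigD1 i) //= lerDl; exact: sumr_ge0. Qed.

Lemma simplex_mix s t l : simplex s -> simplex t -> 0 <= l <= 1 ->
  simplex (fun i => l * s i + (1 - l) * t i).
Proof.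
move=> [s0 s1] [t0 t1] /andP[l0 l1]; split.
  by move=> i; rewrite addr_ge0 // mulr_ge0 //; lra.
by rewrite big_split /= -!mulr_sumr s1 t1; ring.
Qed.

Lemma simplex_conv m (w : 'I_m -> R) (T : 'I_m -> 'I_n -> R) :
  (forall j, 0 <= w j) -> \sum_j w j = 1 -> (forall j, simplex (T j)) ->
  simplex (fun i => \sum_j w j * T j i).
Proof.
move=> w0 w1 sT; split=> [i|].
  by apply: sumr_ge0 => j _; rewrite mulr_ge0 //; case: (sT j).
rewrite exchange_big /= -[RHS]w1; apply: eq_bigr => j _.
by rewrite -mulr_sumr; case: (sT j) => _ ->; rewrite mulr1.
Qed.

Lemma simplex_delta (j : 'I_n) : simplex (fun i => (i == j)%:R : R).
Proof.
split=> [i|]; first by case: (i == j).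
by rewrite (bigD1 j) //= eqxx big1 ?addr0 // => i /negbTE ->.
Qed.

Lemma entropy_delta (j : 'I_n) : entropy (fun i => (i == j)%:R : R) = 0.
Proof.
rewrite /entropy big1 // => i _; rewrite /ent_term; case: (i == j) => /=.
  by rewrite oner_eq0 invr1 /log2 ln1 mul0r mulr0.
by rewrite eqxx.
Qed.

Lemma entropyE t : (forall i, 0 <= t i) ->
  entropy t = (\sum_i negxlnx (t i)) / ln 2.
Proof. by move=> t0; rewrite /entropy mulr_suml; apply: eq_bigr => i _; exact: ent_termE. Qed.

Lemma entropy_ge0 t : simplex t -> 0 <= entropy t.
Proof.
move=> st; rewrite entropyE; last by case: st.
rewrite divr_ge0 ?(ltW (@ln2_gt0 R)) //; apply: sumr_ge0 => i _.
by apply: negxlnx_ge0; rewrite simplex_le1 // andbT; case: st.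
Qed.

Lemma entropy_le_log2 t : simplex t -> entropy t <= log2 n%:R.
Proof.
move=> st; have [t0 t1] := st.
have np : 0 < n%:R :> R by rewrite ltr0n (simplex_gt0 st).
have ni : 0 < n%:R^-1 :> R by rewrite invr_gt0.
have : \sum_i (t i - n%:R^-1) <= \sum_i (t i * ln (t i) - t i * ln n%:R^-1).
  by apply: ler_sum => i _; apply: gibbs_le => //; exact: ltW.
rewrite sumrB t1 sumr_const card_ord -[_ *+ n]mulr_natr mulVf ?gt_eqF //.
rewrite sumrB -mulr_suml t1 mul1r lnV ?posrE // subrr => h.
rewrite entropyE // /log2 ler_pM2r ?invr_gt0 ?ln2_gt0 // /negxlnx sumrN; lra.
Qed.

Lemma entropy_concave s t l : simplex s -> simplex t -> 0 <= l <= 1 ->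
  l * entropy s + (1 - l) * entropy t <= entropy (fun i => l * s i + (1 - l) * t i).
Proof.
move=> ss st l01; have [u0 _] := simplex_mix ss st l01.
move: ss st l01 => [s0 _] [t0 _] /andP[l0 l1].
rewrite !entropyE // !mulrA -mulrDl ler_pM2r ?invr_gt0 ?ln2_gt0 //.
rewrite !mulr_sumr -big_split /=; apply: ler_sum => i _.
by apply: negxlnx_concave => //; lra.
Qed.

(* The defect is at most the binary entropy of [l], hence at most 1. *)
Lemma entropy_mix_le s t l : simplex s -> simplex t -> 0 <= l <= 1 ->
  entropy (fun i => l * s i + (1 - l) * t i) <= l * entropy s + (1 - l) * entropy t + 1.
Proof.
move=> ss st l01; have [u0 _] := simplex_mix ss st l01.
move: ss st l01 => [s0 s1] [t0 t1] /andP[l0 l1].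
have m0 : 0 <= 1 - l by lra.
have l2 := @ln2_gt0 R.
rewrite !entropyE //.
set Su := \sum_i _; set Ss := \sum_i _; set St := \sum_i _.
have -> : l * (Ss / ln 2) + (1 - l) * (St / ln 2) + 1 =
    (l * Ss + (1 - l) * St + ln 2) / ln 2 by field; rewrite gt_eqF.
rewrite ler_pM2r ?invr_gt0 // /Su /Ss /St.
have h i : negxlnx (l * s i + (1 - l) * t i) <=
    l * negxlnx (s i) + s i * negxlnx l + ((1 - l) * negxlnx (t i) + t i * negxlnx (1 - l)).
  by rewrite -!negxlnxM //; apply: negxlnxD_le; exact: mulr_ge0.
apply: le_trans (ler_sum _ (fun i _ => h i)) _.
rewrite big_split /= !big_split /= -!mulr_sumr -!mulr_suml s1 t1 !mul1r.
have lm : l + (1 - l) = 1 by ring.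
have := negxlnx_binary_le l0 m0 lm; lra.
Qed.

Lemma simplex_sum_sqr_dev t : simplex t ->
  \sum_i (n%:R^-1 - t i) ^+ 2 = \sum_i t i ^+ 2 - n%:R^-1 :> R.
Proof.
move=> st; have [_ t1] := st.
have n0 : n%:R != 0 :> R by rewrite pnatr_eq0 -lt0n (simplex_gt0 st).
have e i : (n%:R^-1 - t i) ^+ 2 = t i ^+ 2 - (2 * n%:R^-1) * t i + n%:R^-1 ^+ 2 by ring.
under eq_bigr do rewrite e.
rewrite big_split sumrB /= -mulr_sumr t1 sumr_const card_ord -mulr_natr.
by field.
Qed.

Lemma log2_sub_entropy_le t : simplex t ->
  log2 n%:R - entropy t <= n%:R / ln 2 * \sum_i (n%:R^-1 - t i) ^+ 2.
Proof.
move=> st; have [t0 t1] := st.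
have np : 0 < n%:R :> R by rewrite ltr0n (simplex_gt0 st).
have h i : t i * ln (t i) + t i * ln n%:R <= t i * (n%:R * t i - 1).
  have [->|tn0] := eqVneq (t i) 0; first by rewrite !mul0r addr0.
  have tp : 0 < t i by rewrite lt_def tn0 t0.
  rewrite -mulrDr ler_pM2l // -lnM ?posrE // mulrC.
  exact: ln_le_subr1 (mulr_gt0 np tp).
have : \sum_i (t i * ln (t i) + t i * ln n%:R) <= \sum_i t i * (n%:R * t i - 1).
  by apply: ler_sum => i _; exact: h.
have -> : \sum_i t i * (n%:R * t i - 1) = n%:R * \sum_i t i ^+ 2 - 1.
  rewrite (eq_bigr (fun i => n%:R * t i ^+ 2 - t i)); last by move=> i _; ring.
  by rewrite sumrB -mulr_sumr t1.
rewrite big_split /= -mulr_suml t1 mul1r => H.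
rewrite simplex_sum_sqr_dev // entropyE // /log2 /negxlnx sumrN.
rewrite -mulrBl mulrAC ler_pM2r ?invr_gt0 ?ln2_gt0 //.
rewrite mulrBr mulfV ?gt_eqF //; lra.
Qed.

End Entropy.

Section Distance.
Variables (R : realType) (k : nat).
Implicit Types (x y a : 'I_k -> R) (A : set ('I_k -> R)).

Lemma edist_ge0 x y : 0 <= edist x y.
Proof. exact: sqrtr_ge0. Qed.

Lemma edist_xx x : edist x x = 0.
Proof. by rewrite /edist big1 ?sqrtr0 // => i _; rewrite subrr expr2 mulr0. Qed.

Lemma dist_set_le x A a : A a -> dist_set x A <= edist x a.
Proof.
move=> Aa; apply: ge_inf; last by exists a.
by exists 0 => _ [b _ <-]; exact: edist_ge0.
Qed.

Lemma dist_set_ge x A d : A !=set0 -> (forall a, A a -> d <= edist x a) ->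
  d <= dist_set x A.
Proof.
move=> [a Aa] h; apply: lb_le_inf; first by exists (edist x a), a.
by move=> _ [b Ab <-]; exact: h.
Qed.

Lemma dist_set_mem A a : A a -> dist_set a A = 0.
Proof.
move=> Aa; apply/le_anti; rewrite -{1}(edist_xx a) dist_set_le //=.
by apply: dist_set_ge => [|b _]; [exists a | exact: edist_ge0].
Qed.

Lemma conv_hull_sub A : A `<=` conv_hull A.
Proof.
move=> a Aa; exists 1%N, (fun=> 1), (fun=> a).
by do !split=> //; [rewrite big_ord1 | apply/funext => i; rewrite big_ord1 mul1r].
Qed.

End Distance.

Lemma sup_attained (R : realType) (S : set R) x : S x -> ubound S x -> sup S = x.
Proof.
move=> Sx ubx; apply/le_anti/andP; split; first by apply: ge_sup => //; exists x.
by apply: ub_le_sup => //; exists x.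
Qed.

Section Graph.
Variables (R : realType) (n : nat).
Implicit Types (s t u : 'I_n -> R) (c d l : R).

Local Notation M := (Mconst R n).
Local Notation A := (setA R n).

Definition vpoint c t : 'I_n.+1 -> R :=
  fun i => if unlift ord0 i is Some j then M * t j else c.

Lemma embedE t : embed t = vpoint (entropy t) t.
Proof. by []. Qed.

Lemma edist_vpoint c d s t : edist (vpoint c s) (vpoint d t) =
  Num.sqrt ((c - d) ^+ 2 + M ^+ 2 * \sum_i (s i - t i) ^+ 2).
Proof.
rewrite /edist big_ord_recl /vpoint unlift_none mulr_sumr.
by congr (Num.sqrt (_ + _)); apply: eq_bigr => i _; rewrite liftK; ring.
Qed.

Lemma vpoint_mix c d s t l :
  (fun i => l * vpoint c s i + (1 - l) * vpoint d t i) =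
  vpoint (l * c + (1 - l) * d) (fun i => l * s i + (1 - l) * t i).
Proof. by apply/funext => i; rewrite /vpoint; case: unlift => // j; ring. Qed.

Lemma vpoint_conv m (w : 'I_m -> R) (c : 'I_m -> R) (T : 'I_m -> 'I_n -> R) :
  (fun i => \sum_j w j * vpoint (c j) (T j) i) =
  vpoint (\sum_j w j * c j) (fun i => \sum_j w j * T j i).
Proof.
apply/funext => i; rewrite /vpoint; case: unlift => // j.
by rewrite mulr_sumr; apply: eq_bigr => l _; ring.
Qed.

Lemma setA_embed t : simplex t -> A (embed t).
Proof. by exists t. Qed.

Lemma setA_nonempty : (0 < n)%N -> A !=set0.
Proof.
by move=> n0; exists (embed (fun i => (i == Ordinal n0)%:R)); exact/setA_embed/simplex_delta.
Qed.

Lemma dist_setA_vpoint_le c u : simplex u ->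
  dist_set (vpoint c u) A <= `|c - entropy u|.
Proof.
move=> su; apply: le_trans (dist_set_le _ (setA_embed su)) _.
rewrite embedE edist_vpoint big1 ?mulr0 ?addr0 ?sqrtr_sqr // => i _.
by rewrite subrr expr2 mulr0.
Qed.

Lemma setA_approx_convex : approx_convex A.
Proof.
move=> _ _ [s ss <-] [t st <-] l l01; rewrite !embedE vpoint_mix.
apply: le_trans (dist_setA_vpoint_le _ (simplex_mix ss st l01)) _.
have := entropy_concave ss st l01; have := entropy_mix_le ss st l01.
by rewrite ler_norml => ? ?; apply/andP; split; lra.
Qed.

Lemma log2_ge0 : (0 < n)%N -> 0 <= log2 (n%:R : R).
Proof. by move=> n0; rewrite divr_ge0 ?ln_ge0 ?ler1n // ltW // ln2_gt0. Qed.

Lemma Mconst_sqr : (0 < n)%N -> M ^+ 2 = 2 / ln 2 * n%:R * log2 n%:R.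
Proof.
move=> n0; rewrite sqr_sqrtr //.
by rewrite !mulr_ge0 ?ler0n ?invr_ge0 ?ln_ge0 ?ler1n ?(ltW (@ln2_gt0 R)).
Qed.

Lemma conv_hull_setA b : conv_hull A b ->
  exists c u, [/\ simplex u, 0 <= c, c <= log2 n%:R & b = vpoint c u].
Proof.
move=> [m [w [p [w0 [w1 [pA ->]]]]]].
have /choice[T hT] : forall j, exists t, simplex t /\ embed t = p j.
  by move=> j; case: (pA j) => t ? ?; exists t.
have sT j : simplex (T j) by case: (hT j).
have -> : (fun i => \sum_j w j * p j i) = fun i => \sum_j w j * vpoint (entropy (T j)) (T j) i.
  by apply/funext => i; apply: eq_bigr => j _; rewrite -embedE (proj2 (hT j)).
rewrite vpoint_conv; do 2 eexists; split; last by [].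
- exact: simplex_conv.
- by apply: sumr_ge0 => j _; rewrite mulr_ge0 ?entropy_ge0.
- have -> : log2 (n%:R : R) = \sum_j w j * log2 n%:R by rewrite -mulr_suml w1 mul1r.
  apply: ler_sum => j _.
  by rewrite ler_wpM2l ?w0 ?entropy_le_log2.
Qed.

Lemma dist_conv_hull_setA_le b : conv_hull A b -> dist_set b A <= log2 n%:R.
Proof.
move=> /conv_hull_setA[c [u [su c0 cL ->]]].
apply: le_trans (dist_setA_vpoint_le c su) _.
have := entropy_ge0 su; have := entropy_le_log2 su.
by rewrite ler_norml => ? ?; apply/andP; split; lra.
Qed.

Definition barycenter : 'I_n.+1 -> R := vpoint 0 (fun=> n%:R^-1).

Lemma barycenter_conv_hull : (0 < n)%N -> conv_hull A barycenter.
Proof.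
move=> n0; have n0R : n%:R != 0 :> R by rewrite pnatr_eq0 -lt0n.
exists n, (fun=> n%:R^-1), (fun j => embed (fun i => (i == j)%:R)).
split=> [j|]; first by rewrite invr_ge0 ler0n.
split; first by rewrite sumr_const card_ord -[_ *+ n]mulr_natr mulVf.
split=> [j|]; first exact/setA_embed/simplex_delta.
rewrite (vpoint_conv (fun=> n%:R^-1) (fun j => entropy (fun i => (i == j)%:R))).
rewrite /barycenter big1 => [|j _]; last by rewrite entropy_delta mulr0.
congr vpoint; apply/funext => i.
rewrite (bigD1 i) //= eqxx mulr1 big1 ?addr0 // => j /negbTE.
by rewrite eq_sym => ->; rewrite mulr0.
Qed.

Lemma barycenter_dist_ge : (0 < n)%N -> log2 n%:R <= dist_set barycenter A.
Proof.
move=> n0; apply: dist_set_ge; first exact: setA_nonempty.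
move=> _ [t st <-].
rewrite embedE edist_vpoint Mconst_sqr // sub0r sqrrN.
set L := log2 (n%:R : R); set D := \sum_i _.
have L0 : 0 <= L by exact: log2_ge0.
have l2 := @ln2_gt0 R.
(* With this choice of [M] the squared distance is [entropy t ^+ 2 + 2 L g]. *)
set g := n%:R / ln 2 * D.
have g0 : 0 <= g.
  by rewrite /g /D !mulr_ge0 ?ler0n ?invr_ge0 ?(ltW l2) // sumr_ge0 // => i _; exact: sqr_ge0.
have -> : 2 / ln 2 * n%:R * L * D = 2 * L * g by rewrite /g; field; rewrite gt_eqF.
rewrite -[X in X <= _](ger0_norm L0) -sqrtr_sqr ler_sqrt; last first.
  exact: addr_ge0 (sqr_ge0 _) (mulr_ge0 (mulr_ge0 (ler0n _ 2) L0) g0).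
exact: sqr_le_sqrD_gap (entropy_ge0 st) g0 (log2_sub_entropy_le st).
Qed.

Lemma hausdorff_setA_conv_hull : (0 < n)%N -> hausdorff A (conv_hull A) = log2 n%:R.
Proof.
move=> n0; have [a0 Aa0] := setA_nonempty n0.
have supA : sup [set dist_set a (conv_hull A) | a in A] = 0.
  apply: sup_attained; first by exists a0; rewrite // dist_set_mem //; exact: conv_hull_sub.
  by move=> _ [a Aa <-]; rewrite dist_set_mem //; exact: conv_hull_sub.
have supC : sup [set dist_set b A | b in conv_hull A] = log2 n%:R.
  apply: sup_attained; last by move=> _ [b Cb <-]; exact: dist_conv_hull_setA_le.
  have := barycenter_dist_ge n0; have := dist_conv_hull_setA_le (barycenter_conv_hull n0).
  by move=> h1 h2; exists barycenter; [exact: barycenter_conv_hull | apply/le_anti/andP].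
by rewrite /hausdorff supA supC max_r // log2_ge0.
Qed.

Lemma simplex_sum_sqr_sub_le2 s t : simplex s -> simplex t ->
  \sum_i (s i - t i) ^+ 2 <= 2.
Proof.
move=> ss st; apply: le_trans (_ : \sum_i (s i + t i) <= 2).
  apply: ler_sum => i _.
  have := simplex_le1 i ss; have := simplex_le1 i st.
  have [s0 _] := ss; have [t0 _] := st; have := s0 i; have := t0 i.
  nra.
by rewrite big_split /=; case: ss => _ ->; case: st => _ ->; lra.
Qed.

Lemma diam_setA_le : (0 < n)%N -> diam A <=
  2 / Num.sqrt (ln (2 : R)) * Num.sqrt (n%:R * log2 (n%:R : R)) + log2 (n%:R : R).
Proof.
move=> n0; set L := log2 (n%:R : R); set B := 2 / Num.sqrt _ * _.
have L0 : 0 <= L by exact: log2_ge0.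
have l2 := @ln2_gt0 R.
have B0 : 0 <= B by rewrite mulr_ge0 ?sqrtr_ge0 // divr_ge0 ?sqrtr_ge0.
have BB : B ^+ 2 = 2 * M ^+ 2.
  rewrite Mconst_sqr // -/L !exprMn exprVn.
  rewrite !sqr_sqrtr ?(mulr_ge0 (ler0n _ n) L0) ?(ltW l2) //.
  by field; rewrite gt_eqF.
rewrite /diam; apply: ge_sup.
  by have [a Aa] := setA_nonempty n0; exists (edist a a), a, a.
move=> _ [_ [_ [[s ss <-] [[t st <-] ->]]]].
rewrite !embedE edist_vpoint addrC; apply: le_trans (sqrt_sqrD_le B0 L0).
rewrite ler_sqrt ?addr_ge0 ?sqr_ge0 //; apply: lerD.
  by rewrite BB mulrC ler_wpM2r ?sqr_ge0 // simplex_sum_sqr_sub_le2.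
have := entropy_ge0 ss; have := entropy_ge0 st.
have := entropy_le_log2 ss; have := entropy_le_log2 st; rewrite -/L.
nra.
Qed.

End Graph.

Theorem theorem5p4 (R : realType) (n : nat) (hn : (4 <= n)%N) :
  approx_convex (setA R n) /\
  hausdorff (setA R n) (conv_hull (setA R n)) = log2 (n%:R : R) /\
  diam (setA R n) <= 2 / Num.sqrt (ln (2 : R)) * Num.sqrt (n%:R * log2 (n%:R : R)) + log2 (n%:R : R).
Proof.
have n0 : (0 < n)%N by apply: leq_trans hn.
split; first exact: setA_approx_convex.
split; first exact: hausdorff_setA_conv_hull.
exact: diam_setA_le.
Qed.
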